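(* For every $n\in\mathbb{N}$, $\phi(\omega^{2n})=P_n(1)$ and $\phi(\omega^{2n+1})=0$.
   Context: $\omega=a+a^*$ is the standard V-monotone Gaussian operator on the continuous V-monotone Fock space $\mathcal{CV}=\mathbb{C}\Lambda\oplus\bigoplus_{n\ge1}L^2(\mathcal X_n)$, with vacuum state $\phi(T)=\langle T\Lambda,\Lambda\rangle$, where $\mathcal X_n=\bigcup_{m=1}^n\{(x_1,\dots,x_n)\in\mathbb{R}^n:x_1>\dots>x_m<\dots<x_n\}$; $a\Lambda=\mathbb 1_{[0,1]}$, $(ag)(x,x_1,\dots,x_n)=\mathbb 1_{[0,1]}(x)\mathbb 1_{\mathcal X_{n+1}}(x,x_1,\dots,x_n)g(x_1,\dots,x_n)$, and $a^*$ is its adjoint, explicitly $a^*\Lambda=0$, $a^*g=(\int_0^1 g)\Lambda$ for $g\in L^2(\mathcal X_1)$, and $(a^*g)(\vec x)=\mathbb 1_{\mathcal X_{n,1}}(\vec x)\int_0^{x_1}g(x,\vec x)dx+\int_{x_1}^1 g(x,\vec x)dx$ for $g\in L^2(\mathcal X_{n+1})$, where $\mathcal X_{n,1}=\{x_1<\dots<x_n\}$. The polynomials $P_n,Q_n$ on $[0,1]$ are defined by $Q_0=P_0=1$, $Q_{n+1}(x)=\sum_{m=0}^n\big[\int_x^1Q_m(t)dt\big]Q_{n-m}(x)$, $P_{n+1}(x)=\sum_{m=0}^n\big[\int_0^xP_m(t)dt+\int_x^1Q_m(t)dt\big]P_{n-m}(x)$. *)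

From Stdlib Require Import Reals List Classical ClassicalEpsilon.
Import ListNotations.
Open Scope R_scope.

(** Total Riemann integral: the Riemann integral of f from a to b when f is
    Riemann integrable there, and 0 otherwise (RiemannInt does not depend on
    the integrability proof, RiemannInt_P5). *)
Definition Rint (f : R -> R) (a b : R) : R :=
  match excluded_middle_informative (inhabited (Riemann_integrable f a b)) with
  | left H => RiemannInt (epsilon H (fun _ => True))
  | right _ => 0
  end.

(** Polynomials Q_n, P_n (as functions on R), via lists of the first n+1 of them. *)
Fixpoint Qs (n : nat) : list (R -> R) :=
  match n with
  | O => [fun _ => 1]
  | S k => let L := Qs k in
      L ++ [fun x => sum_f_R0 (fun m =>
               Rint (nth m L (fun _ => 0)) x 1 * nth (k - m) L (fun _ => 0) x) k]
  end.

Definition Q (n : nat) : R -> R := nth n (Qs n) (fun _ => 0).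

Fixpoint Ps (n : nat) : list (R -> R) :=
  match n with
  | O => [fun _ => 1]
  | S k => let L := Ps k in
      L ++ [fun x => sum_f_R0 (fun m =>
               (Rint (nth m L (fun _ => 0)) 0 x + Rint (Q m) x 1)
               * nth (k - m) L (fun _ => 0) x) k]
  end.

Definition P (n : nat) : R -> R := nth n (Ps n) (fun _ => 0).

(** Fock space vectors: a single function on finite lists of reals.
    The value at [] is the coefficient of the vacuum Lambda; the restriction
    to lists of length n is the n-particle component (a function on R^n). *)
Definition FockV := list R -> R.

Definition ltb (x y : R) : bool := if Rlt_dec x y then true else false.

Fixpoint incrb (l : list R) : bool :=
  match l with
  | x :: ((y :: _) as t) => ltb x y && incrb t
  | _ => true
  end.

(** membership in X_n (n = length l >= 1):
    exists m in 1..n with x1 > ... > xm < ... < xn *)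
Fixpoint vshapeb (l : list R) : bool :=
  match l with
  | [] => false
  | [_] => true
  | x :: ((y :: _) as t) => (ltb y x && vshapeb t) || incrb l
  end.

Definition ind01 (x : R) : R :=
  if Rle_dec 0 x then (if Rle_dec x 1 then 1 else 0) else 0.

Definition indb (b : bool) : R := if b then 1 else 0.

Definition vac : FockV := fun l => match l with [] => 1 | _ => 0 end.

Definition aop (g : FockV) : FockV := fun l =>
  match l with
  | [] => 0
  | x :: xs => ind01 x * indb (vshapeb l) * g xs
  end.

Definition aadj (g : FockV) : FockV := fun l =>
  match l with
  | [] => Rint (fun x => g [x]) 0 1
  | x1 :: _ => indb (incrb l) * Rint (fun x => g (x :: l)) 0 x1
               + Rint (fun x => g (x :: l)) x1 1
  end.

Definition omega (g : FockV) : FockV := fun l => aop g l + aadj g l.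

Definition omega_pow (k : nat) (g : FockV) : FockV := Nat.iter k omega g.

(** vacuum state phi(T) = <T Lambda, Lambda> = Lambda-coefficient of T Lambda *)
Definition phi_omega_pow (k : nat) : R := omega_pow k vac [].

From Coquelicot Require Import Coquelicot.
From Stdlib Require Import Reals List Lia Lra Arith FunctionalExtensionality ClassicalEpsilon.
Import ListNotations.
Open Scope R_scope.

(** We compute phi(omega^k) = <omega^k Lambda, Lambda> by describing the whole
    vector omega^k Lambda.  On an admissible configuration x :: xs (points of
    [0,1] in the V-shaped region) its first particle factors off:
      (omega^(k+1) Lambda)(x :: xs) = sum_i E_i(x) (omega^(k-i) Lambda)(xs),
    where E_i = P_(i/2) or Q_(i/2) for even i (according to whether x :: xs is
    increasing) and E_i = 0 for odd i.  This is proved by strong induction on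
    k: the creator [a] contributes the term i = 0, and the annihilator [a^*]
    integrates the expansion of the next particle, which by the defining
    recursion of P and Q reproduces the coefficients E_(i+2).  Integrating
    once more over the last particle gives phi(omega^k) = E_k(1) for the
    increasing branch, i.e. P_n(1) for k = 2n and 0 for k odd. *)

Definition conv (f g : nat -> R) (n : nat) : R :=
  sum_f_R0 (fun i => f i * g (n - i)%nat) n.

Lemma conv_ext f f' g g' n :
  (forall i, (i <= n)%nat -> f i = f' i) ->
  (forall i, (i <= n)%nat -> g i = g' i) -> conv f g n = conv f' g' n.
Proof.
  intros Hf Hg; unfold conv; apply sum_eq; intros i Hi.
  rewrite Hf, Hg by lia; reflexivity.
Qed.

Lemma conv_front f g n :
  conv f g (S n) = f 0%nat * g (S n) + conv (fun i => f (S i)) g n.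
Proof. unfold conv. rewrite decomp_sum by lia. reflexivity. Qed.

Lemma conv_back f g n :
  conv f g (S n) = f (S n) * g 0%nat + conv f (fun j => g (S j)) n.
Proof.
  unfold conv. rewrite tech5, Nat.sub_diag, Rplus_comm. f_equal.
  apply sum_eq; intros i Hi. do 2 f_equal. lia.
Qed.

Lemma conv_plus_l u v g n :
  conv (fun m => u m + v m) g n = conv u g n + conv v g n.
Proof. unfold conv. rewrite <- sum_plus. apply sum_eq; intros; ring. Qed.

Lemma conv_plus_r f u v n :
  conv f (fun m => u m + v m) n = conv f u n + conv f v n.
Proof. unfold conv. rewrite <- sum_plus. apply sum_eq; intros; ring. Qed.

Lemma conv_scal_l c u g n : conv (fun m => c * u m) g n = c * conv u g n.
Proof. unfold conv. rewrite scal_sum. apply sum_eq; intros; ring. Qed.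

Lemma conv_scal_r f u c n : conv f (fun m => u m * c) n = conv f u n * c.
Proof. unfold conv. rewrite Rmult_comm, scal_sum. apply sum_eq; intros; ring. Qed.

Lemma conv_assoc f g h n : conv (conv f g) h n = conv f (conv g h) n.
Proof.
  revert h. induction n as [|n IH]; intro h.
  - unfold conv; simpl; ring.
  - rewrite conv_back, conv_back, IH, (conv_back f (conv g h)).
    rewrite (conv_ext f f (fun j => conv g h (S j))
               (fun j => g (S j) * h 0%nat + conv g (fun j => h (S j)) j) n)
      by (intros; first [reflexivity | apply conv_back]).
    rewrite conv_plus_r, conv_scal_r.
    replace (conv g h 0) with (g 0%nat * h 0%nat) by (unfold conv; simpl; ring).
    ring.
Qed.

(** Generating-function identity behind the expansion of omega^k:
    if [e = 1 + t^2 d e] and [h = t e g] (up to order n), then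
    [g_(n+1) + (d h)_n = (e g)_(n+1)]. *)
Lemma conv_step (d e g h : nat -> R) n :
  e 0%nat = 1 -> e 1%nat = 0 -> (forall i, e (S (S i)) = conv d e i) ->
  h 0%nat = 0 -> (forall j, (j < n)%nat -> h (S j) = conv e g j) ->
  g (S n) + conv d h n = conv e g (S n).
Proof.
  intros He0 He1 Hrec Hh0 Hh.
  rewrite conv_front, He0. destruct n as [|m].
  - unfold conv; simpl. rewrite He1, Hh0. ring.
  - rewrite conv_back, conv_front, He1, Hh0.
    rewrite (conv_ext d d (fun j => h (S j)) (conv e g) m)
      by (intros; first [reflexivity | apply Hh; lia]).
    rewrite <- conv_assoc.
    rewrite (conv_ext (fun i => e (S (S i))) (conv d e) g g m)
      by (intros; first [reflexivity | apply Hrec]).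
    ring.
Qed.

Lemma Rint_RInt f a b : ex_RInt f a b -> Rint f a b = RInt f a b.
Proof.
  intros H. unfold Rint.
  destruct (excluded_middle_informative (inhabited (Riemann_integrable f a b))) as [Hi|Hn].
  - rewrite RInt_Reals with (pr := epsilon Hi (fun _ => True)). reflexivity.
  - exfalso; apply Hn; constructor; apply ex_RInt_Reals_0; exact H.
Qed.

Lemma Rint_is_RInt g a b : (forall z, continuous g z) -> is_RInt g a b (Rint g a b).
Proof.
  intros Hg. assert (Hex : ex_RInt g a b)
    by (apply (ex_RInt_continuous (V:=R_CompleteNormedModule)); intros; apply Hg).
  rewrite Rint_RInt by exact Hex. apply (RInt_correct (V:=R_CompleteNormedModule)), Hex.
Qed.

Lemma continuous_Rint_upper g a y0 :
  (forall z, continuous g z) -> continuous (fun y => Rint g a y) y0.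
Proof.
  intros Hg. apply (continuous_RInt_1 (V:=R_NormedModule) g a y0).
  apply filter_forall; intros; apply Rint_is_RInt, Hg.
Qed.

Lemma continuous_Rint_lower g b y0 :
  (forall z, continuous g z) -> continuous (fun y => Rint g y b) y0.
Proof.
  intros Hg. apply (continuous_RInt_2 (V:=R_NormedModule) g y0 b).
  apply filter_forall; intros; apply Rint_is_RInt, Hg.
Qed.

Lemma Rint_zero a b : Rint (fun _ => 0) a b = 0.
Proof.
  rewrite Rint_RInt by apply ex_RInt_const. rewrite RInt_const.
  unfold scal; simpl; unfold mult; simpl. ring.
Qed.

Lemma Rint_point f a : Rint f a a = 0.
Proof. rewrite Rint_RInt by apply ex_RInt_point. rewrite RInt_point. reflexivity. Qed.

Lemma is_RInt_sum (h : nat -> R -> R) (I : nat -> R) n a b :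
  (forall i, (i <= n)%nat -> is_RInt (h i) a b (I i)) ->
  is_RInt (fun y => sum_f_R0 (fun i => h i y) n) a b (sum_f_R0 I n).
Proof.
  induction n as [|n IH]; intros Hh; simpl.
  - apply Hh; lia.
  - apply (is_RInt_plus (V:=R_NormedModule)); [apply IH; intros i Hi|]; apply Hh; lia.
Qed.

Lemma Rint_conv (u : nat -> R -> R) (K : nat -> R) n (g : R -> R) a b :
  a <= b -> (forall i y, continuous (u i) y) ->
  (forall y, a < y < b -> g y = conv (fun i => u i y) K n) ->
  Rint g a b = conv (fun i => Rint (u i) a b) K n.
Proof.
  intros Hab Hu Hg.
  assert (His : is_RInt g a b (conv (fun i => Rint (u i) a b) K n)).
  { apply (is_RInt_ext (V:=R_NormedModule) (fun y => conv (fun i => u i y) K n)).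
    - intros y Hy. rewrite Rmin_left, Rmax_right in Hy by lra. symmetry; apply Hg, Hy.
    - apply (is_RInt_sum (fun i y => u i y * K (n - i)%nat)). intros i _.
      apply (is_RInt_ext (V:=R_NormedModule) (fun y => scal (K (n - i)%nat) (u i y))).
      + intros; unfold scal; simpl; unfold mult; simpl; ring.
      + replace (Rint (u i) a b * K (n - i)%nat)
          with (scal (K (n - i)%nat) (Rint (u i) a b))
          by (unfold scal; simpl; unfold mult; simpl; ring).
        apply (is_RInt_scal (V:=R_NormedModule)), Rint_is_RInt, Hu. }
  rewrite Rint_RInt by (eexists; exact His).
  apply (is_RInt_unique (V:=R_CompleteNormedModule)), His.
Qed.

Lemma growing_list_nth {A : Type} (L : nat -> list A) (d : A) :
  length (L 0%nat) = 1%nat -> (forall k, exists a, L (S k) = L k ++ [a]) ->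
  forall k, length (L k) = S k /\
            forall m, (m <= k)%nat -> nth m (L k) d = nth m (L m) d.
Proof.
  intros H0 Hstep. induction k as [|k [Hlen Hnth]].
  - split; [exact H0|]. intros m Hm. replace m with 0%nat by lia. reflexivity.
  - destruct (Hstep k) as [a Ha]. rewrite Ha, length_app, Hlen. split; [simpl; lia|].
    intros m Hm. destruct (Nat.eq_dec m (S k)) as [->|Hne]; [rewrite Ha; reflexivity|].
    rewrite app_nth1 by lia. apply Hnth; lia.
Qed.

Lemma Qs_spec k : length (Qs k) = S k /\
  forall m, (m <= k)%nat -> nth m (Qs k) (fun _ => 0) = Q m.
Proof.
  apply (growing_list_nth Qs); [reflexivity | intros; eexists; reflexivity].
Qed.

Lemma Ps_spec k : length (Ps k) = S k /\
  forall m, (m <= k)%nat -> nth m (Ps k) (fun _ => 0) = P m.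
Proof.
  apply (growing_list_nth Ps); [reflexivity | intros; eexists; reflexivity].
Qed.

Lemma Q_S k x :
  Q (S k) x = sum_f_R0 (fun m => Rint (Q m) x 1 * Q (k - m)%nat x) k.
Proof.
  destruct (Qs_spec k) as [Hlen Hnth].
  unfold Q at 1; simpl. rewrite app_nth2, Hlen, Nat.sub_diag by lia; simpl.
  apply sum_eq; intros m Hm. rewrite !Hnth by lia. reflexivity.
Qed.

Lemma P_S k x :
  P (S k) x = sum_f_R0 (fun m => (Rint (P m) 0 x + Rint (Q m) x 1) * P (k - m)%nat x) k.
Proof.
  destruct (Ps_spec k) as [Hlen Hnth].
  unfold P at 1; simpl. rewrite app_nth2, Hlen, Nat.sub_diag by lia; simpl.
  apply sum_eq; intros m Hm. rewrite !Hnth by lia. reflexivity.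
Qed.

Definition kernel (b : bool) (m : nat) : R -> R := if b then P m else Q m.

Lemma kernel_S b k x :
  kernel b (S k) x =
  sum_f_R0 (fun m => (indb b * Rint (P m) 0 x + Rint (Q m) x 1) * kernel b (k - m)%nat x) k.
Proof.
  destruct b; simpl; [rewrite P_S | rewrite Q_S];
    apply sum_eq; intros; simpl; ring.
Qed.

(** Coefficient [Ecoef i b y] of the one-particle expansion of omega^(i+1):
    the kernel of index i/2 for even i, zero for odd i. *)
Definition Ecoef (i : nat) (b : bool) (y : R) : R :=
  if Nat.even i then kernel b (Nat.div2 i) y else 0.

(** [Dcoef a b x] is what the annihilator does to the coefficient [Ecoef a]
    of a particle created on top of a particle at x. *)
Definition Dcoef (a : nat) (b : bool) (x : R) : R :=
  indb b * Rint (Ecoef a true) 0 x + Rint (Ecoef a false) x 1.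

Lemma Ecoef_even m b : Ecoef (2 * m) b = kernel b m.
Proof.
  apply functional_extensionality; intro y.
  unfold Ecoef. rewrite Nat.even_mul, Nat.div2_double. reflexivity.
Qed.

Lemma Ecoef_odd m b : Ecoef (S (2 * m)) b = fun _ => 0.
Proof.
  apply functional_extensionality; intro y.
  unfold Ecoef. rewrite Nat.even_succ, Nat.odd_mul. reflexivity.
Qed.

Lemma Ecoef_0 b y : Ecoef 0 b y = 1.
Proof. destruct b; reflexivity. Qed.

Lemma Dcoef_even m b x : Dcoef (2 * m) b x = indb b * Rint (P m) 0 x + Rint (Q m) x 1.
Proof. unfold Dcoef. rewrite !Ecoef_even. reflexivity. Qed.

Lemma Dcoef_odd m b x : Dcoef (S (2 * m)) b x = 0.
Proof. unfold Dcoef. rewrite !Ecoef_odd, !Rint_zero. ring. Qed.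

Lemma sum_even_terms (g : nat -> R) n :
  (forall m, g (S (2 * m)) = 0) ->
  sum_f_R0 g (2 * n) = sum_f_R0 (fun m => g (2 * m)%nat) n.
Proof.
  intros Hodd. induction n as [|n IH]; [reflexivity|].
  replace (2 * S n)%nat with (S (S (2 * n))) by lia.
  rewrite !tech5, IH, Hodd. replace (S (S (2 * n))) with (2 * S n)%nat by lia. ring.
Qed.

(** The recursion of P and Q, rewritten as [e = 1 + t^2 d e] for the
    generating series of the coefficients. *)
Lemma Ecoef_rec i b x :
  Ecoef (S (S i)) b x = conv (fun a => Dcoef a b x) (fun j => Ecoef j b x) i.
Proof.
  unfold conv. destruct (Nat.Even_or_Odd i) as [[n ->] | [n ->]].
  - replace (S (S (2 * n))) with (2 * S n)%nat by lia.
    rewrite Ecoef_even, kernel_S, sum_even_terms by (intros; rewrite Dcoef_odd; ring).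
    apply sum_eq; intros m Hm.
    replace (2 * n - 2 * m)%nat with (2 * (n - m))%nat by lia.
    rewrite Dcoef_even, Ecoef_even. reflexivity.
  - replace (S (S (2 * n + 1))) with (S (2 * S n)) by lia.
    rewrite Ecoef_odd. symmetry. apply sum_eq_R0. intros a Ha.
    destruct (Nat.Even_or_Odd a) as [[m ->] | [m ->]].
    + replace (2 * n + 1 - 2 * m)%nat with (S (2 * (n - m))) by lia.
      rewrite Ecoef_odd; ring.
    + replace (2 * m + 1)%nat with (S (2 * m)) by lia.
      rewrite Dcoef_odd; ring.
Qed.

Lemma continuous_sum (h : nat -> R -> R) n y0 :
  (forall i, (i <= n)%nat -> continuous (h i) y0) ->
  continuous (fun y => sum_f_R0 (fun i => h i y) n) y0.
Proof.
  induction n as [|n IH]; intros Hh; simpl; [apply Hh; lia|].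
  apply (continuous_plus (fun y => sum_f_R0 (fun i => h i y) n) (h (S n))).
  - apply IH; intros; apply Hh; lia.
  - apply Hh; lia.
Qed.

Lemma continuous_conv (u v : nat -> R -> R) n y0 :
  (forall i, (i <= n)%nat -> continuous (u i) y0) ->
  (forall j, (j <= n)%nat -> continuous (v j) y0) ->
  continuous (fun y => conv (fun a => u a y) (fun j => v j y) n) y0.
Proof.
  intros Hu Hv. apply (continuous_sum (fun i y => u i y * v (n - i)%nat y)).
  intros i Hi. apply (continuous_mult (u i) (v (n - i)%nat)); [apply Hu | apply Hv]; lia.
Qed.

(** All coefficients are continuous, so every integral of them in [a^*] is a
    genuine Riemann integral. *)
Lemma Ecoef_continuous i b y : continuous (Ecoef i b) y.
Proof.
  revert b y. induction i as [i IH] using lt_wf_ind; intros b y.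
  destruct i as [|[|i]].
  - apply (continuous_ext (fun _ => 1)); [intros; symmetry; apply Ecoef_0|].
    apply continuous_const.
  - apply continuous_const.
  - apply (continuous_ext (fun z => conv (fun a => Dcoef a b z) (fun j => Ecoef j b z) i)).
    + intros; symmetry; apply Ecoef_rec.
    + apply (continuous_conv (fun a z => Dcoef a b z) (fun j => Ecoef j b)).
      * intros a Ha. unfold Dcoef.
        apply (continuous_plus (fun z => indb b * Rint (Ecoef a true) 0 z)
                               (fun z => Rint (Ecoef a false) z 1)).
        -- apply (continuous_mult (fun _ => indb b) (fun z => Rint (Ecoef a true) 0 z)).
           ++ apply continuous_const.
           ++ apply continuous_Rint_upper. intros; apply IH; lia.
        -- apply continuous_Rint_lower. intros; apply IH; lia.
      * intros j Hj; apply IH; lia.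
Qed.

(** Admissible configurations: points of [0,1]^n lying in the V-shaped
    region X_n.  Only these are ever reached by omega^k applied to the vacuum
    inside the integrals of [a^*]. *)
Definition good (l : list R) : Prop :=
  Forall (fun z => 0 <= z <= 1) l /\ (l <> [] -> vshapeb l = true).

Lemma ltb_true x y : x < y -> ltb x y = true.
Proof. intros; unfold ltb; destruct (Rlt_dec x y); auto; lra. Qed.

Lemma ltb_false x y : ~ x < y -> ltb x y = false.
Proof. intros; unfold ltb; destruct (Rlt_dec x y); auto; lra. Qed.

Lemma incr_vshape l : incrb l = true -> l <> [] -> vshapeb l = true.
Proof.
  destruct l as [|x [|y t]]; intros Hinc Hne; try reflexivity.
  - congruence.
  - change ((ltb y x && vshapeb (y :: t)) || incrb (x :: y :: t) = true)%bool.
    rewrite Hinc. apply Bool.orb_true_r.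
Qed.

Lemma good_hd x xs : good (x :: xs) -> 0 <= x <= 1.
Proof. intros [Hf _]; inversion Hf; auto. Qed.

Lemma good_up x xs y : good (x :: xs) -> x < y <= 1 ->
  good (y :: x :: xs) /\ incrb (y :: x :: xs) = false.
Proof.
  intros Hg Hy. pose proof (good_hd _ _ Hg) as Hx. destruct Hg as [Hf Hv].
  split; [split|].
  - constructor; auto; lra.
  - intros _. change ((ltb x y && vshapeb (x :: xs)) || incrb (y :: x :: xs) = true)%bool.
    rewrite ltb_true, Hv by (lra || discriminate). reflexivity.
  - change (ltb y x && incrb (x :: xs) = false)%bool. rewrite ltb_false by lra. reflexivity.
Qed.

Lemma good_down x xs y : good (x :: xs) -> incrb (x :: xs) = true -> 0 <= y < x ->
  good (y :: x :: xs) /\ incrb (y :: x :: xs) = true.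
Proof.
  intros Hg Hinc Hy. pose proof (good_hd _ _ Hg) as Hx. destruct Hg as [Hf _].
  assert (Hinc' : incrb (y :: x :: xs) = true).
  { change (ltb y x && incrb (x :: xs) = true)%bool. rewrite ltb_true by lra; auto. }
  repeat split; auto.
  - constructor; auto; lra.
  - intros _; apply incr_vshape; [exact Hinc' | discriminate].
Qed.

Lemma aop_good g x xs : good (x :: xs) -> aop g (x :: xs) = g xs.
Proof.
  intros Hg. pose proof (good_hd _ _ Hg) as Hx. destruct Hg as [_ Hv].
  unfold aop. rewrite Hv by discriminate. unfold ind01, indb.
  destruct (Rle_dec 0 x); [|lra]. destruct (Rle_dec x 1); [|lra]. ring.
Qed.

Lemma aadj_expansion (g : FockV) (H : nat -> R) k x xs : good (x :: xs) ->
  (forall y, good (y :: x :: xs) ->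
     g (y :: x :: xs) = conv (fun i => Ecoef i (incrb (y :: x :: xs)) y) H k) ->
  aadj g (x :: xs) = conv (fun a => Dcoef a (incrb (x :: xs)) x) H k.
Proof.
  intros Hg Hexp. pose proof (good_hd _ _ Hg) as Hx.
  assert (Hup : Rint (fun y => g (y :: x :: xs)) x 1 =
                conv (fun a => Rint (Ecoef a false) x 1) H k).
  { apply (Rint_conv (fun a => Ecoef a false)); [lra | intros; apply Ecoef_continuous |].
    intros y Hy. destruct (good_up x xs y Hg ltac:(lra)) as [Hg' Hinc].
    rewrite Hexp, Hinc by exact Hg'. reflexivity. }
  assert (Hdown : incrb (x :: xs) = true ->
                  Rint (fun y => g (y :: x :: xs)) 0 x =
                  conv (fun a => Rint (Ecoef a true) 0 x) H k).
  { intros Hb. apply (Rint_conv (fun a => Ecoef a true)); [lra | intros; apply Ecoef_continuous |].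
    intros y Hy. destruct (good_down x xs y Hg Hb ltac:(lra)) as [Hg' Hinc].
    rewrite Hexp, Hinc by exact Hg'. reflexivity. }
  unfold aadj, Dcoef. rewrite conv_plus_l, conv_scal_l, Hup.
  destruct (incrb (x :: xs)) eqn:Hb; simpl indb; [rewrite Hdown by reflexivity|]; ring.
Qed.

Definition omega_vac (k : nat) : FockV := omega_pow k vac.

Lemma omega_vac_S k l :
  omega_vac (S k) l = aop (omega_vac k) l + aadj (omega_vac k) l.
Proof. reflexivity. Qed.

Lemma omega_vac_expansion k x xs : good (x :: xs) ->
  omega_vac (S k) (x :: xs) =
  conv (fun i => Ecoef i (incrb (x :: xs)) x) (fun j => omega_vac j xs) k.
Proof.
  revert x xs. induction k as [k IH] using lt_wf_ind; intros x xs Hg.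
  rewrite omega_vac_S, aop_good by exact Hg.
  destruct k as [|m].
  - unfold aadj, conv; simpl. rewrite Ecoef_0, !Rint_zero. ring.
  - rewrite (aadj_expansion _ (fun j => omega_vac j (x :: xs)) m)
      by (exact Hg || (intros; apply IH; auto)).
    apply (conv_step _ _ (fun j => omega_vac j xs)).
    + apply Ecoef_0.
    + reflexivity.
    + intros; apply Ecoef_rec.
    + reflexivity.
    + intros j Hj. apply IH; [lia | exact Hg].
Qed.

Lemma omega_vac_vacuum k : omega_vac k [] = Ecoef k true 1.
Proof.
  induction k as [k IH] using lt_wf_ind.
  destruct k as [|[|m]].
  - reflexivity.
  - unfold omega_vac, omega_pow; simpl. unfold omega, aop, aadj; simpl.
    rewrite Rint_zero. unfold Ecoef; simpl. ring.
  - rewrite omega_vac_S, Ecoef_rec. unfold aop, aadj. rewrite Rplus_0_l.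
    rewrite (Rint_conv (fun a => Ecoef a true) (fun j => omega_vac j []) m)
      by (lra || (intros; apply Ecoef_continuous)
          || (intros y Hy; apply omega_vac_expansion;
              split; [repeat constructor; lra | reflexivity])).
    apply conv_ext.
    + intros a _. unfold Dcoef. rewrite Rint_point. simpl. ring.
    + intros j Hj. apply IH. lia.
Qed.

Theorem mainTheorem3 : forall n : nat,
  phi_omega_pow (2 * n) = P n 1 /\ phi_omega_pow (2 * n + 1) = 0.
Proof.
  intros n. unfold phi_omega_pow. fold (omega_vac (2 * n)) (omega_vac (2 * n + 1)).
  rewrite !omega_vac_vacuum, Nat.add_1_r, Ecoef_even, Ecoef_odd. split; reflexivity.
Qed.
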